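(* Let $P=\begin{pmatrix}\alpha&\beta\\\gamma&\delta\end{pmatrix}\in\mathbb{N}_0^{2\times2}$ be an incidence matrix such that (i) there exists a pair $(i,j)\in\{(\alpha,\beta),(\alpha,\gamma),(\delta,\beta),(\delta,\gamma)\}$ with $\gcd(i,j)\neq1$, and (ii) a row (respectively column) of $P$ dominates the other row (respectively column) of $P$. Then $P$ does not exclusively represent irreducible morphisms.
   Context: Let $\Sigma=\{a,b\}$ with $a_1=a,a_2=b$. A morphism $\varphi:\Sigma^+\to\Sigma^+$ (non-empty images) is Parikh-positive if both letters occur in $\varphi(a)\varphi(b)$. Its incidence matrix is $P(\varphi)=(m_{i,j})$ with $m_{i,j}=|\varphi(a_j)|_{a_i}$; throughout, incidence matrices considered have no zero rows or columns. An automorphism is an injective morphism mapping each letter to a single letter; a morphism is reducible if it equals $\psi_2\circ\psi_1$ with neither $\psi_1,\psi_2$ an automorphism, irreducible otherwise. An incidence matrix $P$ exclusively represents irreducible morphisms if every Parikh-positive morphism $\varphi$ with $P(\varphi)=P$ is irreducible. A row (or column) $(x_1,x_2)$ dominates a row (or column) $(y_1,y_2)$ if $x_1\geq y_1$ and $x_2\geq y_2$. *)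

From mathcomp Require Import all_boot all_algebra.
Set Implicit Arguments. Unset Strict Implicit. Unset Printing Implicit Defensive.

(* Alphabet Sigma = {a, b} encoded as 'I_2 : a_1 = a = ord0, a_2 = b = ord_max. *)
Definition letter := 'I_2.
Definition la : letter := ord0.
Definition lb : letter := ord_max.

Definition word := seq letter.

(* A morphism Sigma^+ -> Sigma^+ is determined by the images of the letters;
   we represent it by that function and require non-empty images. *)
Definition morph := letter -> word.
Definition is_morphism (f : morph) : Prop := forall x, f x != [::].

Definition apply_morph (f : morph) (w : word) : word := flatten (map f w).

Definition comp_morph (psi2 psi1 : morph) : morph :=
  fun x => apply_morph psi2 (psi1 x).

Definition parikh_positive (f : morph) : Prop :=
  la \in f la ++ f lb /\ lb \in f la ++ f lb.

Definition incidence (f : morph) : 'M[nat]_2 :=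
  \matrix_(i < 2, j < 2) count_mem i (f j).

Definition automorphism (f : morph) : Prop :=
  is_morphism f /\ (forall x, size (f x) = 1%N) /\
  (forall u v : word, apply_morph f u = apply_morph f v -> u = v).

Definition reducible (f : morph) : Prop :=
  exists psi1 psi2 : morph,
    [/\ is_morphism psi1, is_morphism psi2,
        ~ automorphism psi1, ~ automorphism psi2 &
        forall x, f x = comp_morph psi2 psi1 x].

Definition irreducible (f : morph) : Prop := ~ reducible f.

Definition excl_irreducible (P : 'M[nat]_2) : Prop :=
  forall f : morph, is_morphism f -> parikh_positive f ->
    incidence f = P -> irreducible f.

Definition row_dominates (P : 'M[nat]_2) (i i' : 'I_2) : Prop :=
  forall j, P i' j <= P i j.
Definition col_dominates (P : 'M[nat]_2) (j j' : 'I_2) : Prop :=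
  forall i, P i j' <= P i j.

Definition no_zero_row_col (P : 'M[nat]_2) : Prop :=
  (forall i, exists j, P i j != 0%N) /\ (forall j, exists i, P i j != 0%N).

From mathcomp Require Import all_boot all_algebra.
From mathcomp Require Import zify.

Set Implicit Arguments.
Unset Strict Implicit.
Unset Printing Implicit Defensive.

(* Incidence matrices are multiplicative under composition, and every matrix
   with nonzero columns M is the incidence matrix of the morphism
   a_j |-> a^(M_1j) b^(M_2j).  If g > 1 divides a row of P, then P = D Q
   with D = diag(g,1) or diag(1,g) and Q the matrix P with that row divided
   by g; dividing a column instead gives P = Q D.  The morphism realizing D
   is not letter-to-letter since g > 1.  Neither is the one realizing Q: else
   every column of Q, hence of P, would contain a zero, so that P, having no
   zero row, would be a diagonal or antidiagonal matrix, and these have no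
   dominating row or column. *)

Lemma letterP (i : letter) : i = la \/ i = lb.
Proof. by case: i => [[|[|//]] ?]; [left | right]; apply: val_inj. Qed.

Definition col_sum (M : 'M[nat]_2) (j : letter) : nat := M la j + M lb j.

Definition letter_to_letter (M : 'M[nat]_2) : Prop := forall j, col_sum M j = 1.

Definition has_dominant_line (P : 'M[nat]_2) : Prop :=
  (exists i i' : letter, i != i' /\ row_dominates P i i') \/
  (exists j j' : letter, j != j' /\ col_dominates P j j').

Lemma count_apply_morph (f : morph) (i : letter) (w : word) :
  count_mem i (apply_morph f w) = \sum_(k < 2) count_mem k w * count_mem i (f k).
Proof.
elim: w => [|x w IHw]; first by rewrite big1.
rewrite /apply_morph /= count_cat -/(apply_morph f w) IHw.
under eq_bigr => k _ do rewrite mulnDl.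
rewrite big_split /=; congr (_ + _).
rewrite (bigD1 x) //= eqxx mul1n big1 ?addn0 // => k /negbTE.
by rewrite eq_sym => ->.
Qed.

Lemma incidence_comp (psi2 psi1 : morph) :
  incidence (comp_morph psi2 psi1) = (incidence psi2 *m incidence psi1)%R.
Proof.
apply/matrixP => i j; rewrite !mxE /comp_morph count_apply_morph.
by apply: eq_bigr => k _; rewrite !mxE mulnC.
Qed.

Lemma morphism_of_incidence (f : morph) :
  no_zero_row_col (incidence f) -> is_morphism f /\ parikh_positive f.
Proof.
case=> rows cols; split=> [j | ].
  by have [i] := cols j; rewrite mxE; case: (f j).
have occurs i : i \in f la ++ f lb.
  have [j] := rows i; rewrite mxE mem_cat -!has_pred1 !has_count.
  by case: (letterP j) => ->; lia.
by split; apply: occurs.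
Qed.

Definition parikh_morph (M : 'M[nat]_2) : morph :=
  fun j => nseq (M la j) la ++ nseq (M lb j) lb.

Lemma incidence_parikh_morph M : incidence (parikh_morph M) = M.
Proof.
apply/matrixP => i j; rewrite mxE count_cat !count_nseq /=.
by case: (letterP i) => ->; rewrite eqxx mul1n; [rewrite addn0 | ].
Qed.

Lemma size_parikh_morph M j : size (parikh_morph M j) = col_sum M j.
Proof. by rewrite size_cat !size_nseq. Qed.

Lemma parikh_morph_is_morphism M :
  (forall j, 0 < col_sum M j) -> is_morphism (parikh_morph M).
Proof. by move=> pos j; rewrite -size_eq0 size_parikh_morph -lt0n. Qed.

Lemma parikh_morph_not_automorphism M :
  ~ letter_to_letter M -> ~ automorphism (parikh_morph M).
Proof. by move=> nM [_ [size1 _]]; apply: nM => j; rewrite -size_parikh_morph. Qed.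

Lemma not_excl_irreducible_of_factorization (P A B : 'M[nat]_2) :
  no_zero_row_col P -> (A *m B)%R = P ->
  (forall j, 0 < col_sum A j) -> (forall j, 0 < col_sum B j) ->
  ~ letter_to_letter A -> ~ letter_to_letter B -> ~ excl_irreducible P.
Proof.
move=> P0 AB_P Apos Bpos nA nB exclP.
pose f := comp_morph (parikh_morph A) (parikh_morph B).
have incf : incidence f = P by rewrite incidence_comp !incidence_parikh_morph.
have [fmorph fpos] : is_morphism f /\ parikh_positive f.
  by apply: morphism_of_incidence; rewrite incf.
apply: (exclP f fmorph fpos incf).
exists (parikh_morph B), (parikh_morph A); split=> //.
- exact: parikh_morph_is_morphism.
- exact: parikh_morph_is_morphism.
- exact: parikh_morph_not_automorphism.
- exact: parikh_morph_not_automorphism.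
Qed.

Lemma no_zero_row_col_sums P :
  no_zero_row_col P -> (forall i, 0 < P i la + P i lb) /\ (forall j, 0 < col_sum P j).
Proof.
case=> rows cols; split=> [i | j].
  by have [j] := rows i; case: (letterP j) => ->; lia.
by have [i] := cols j; rewrite /col_sum; case: (letterP i) => ->; lia.
Qed.

Lemma not_dominant_of_zero_in_cols P :
  no_zero_row_col P -> (forall j, (P la j == 0) || (P lb j == 0)) ->
  ~ has_dominant_line P.
Proof.
move=> /no_zero_row_col_sums[rows cols] zeros.
case=> [[i [i' [ne dom]]] | [i [i' [ne dom]]]];
  move: (dom la) (dom lb) (rows la) (rows lb) (cols la) (cols lb) (zeros la) (zeros lb);
  rewrite /col_sum; case: (letterP i) ne => ->; case: (letterP i') => -> //; lia.
Qed.

Definition dilation (i : letter) (g : nat) : 'M[nat]_2 :=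
  diag_mx (\row_k (if k == i then g else 1%N)).

Lemma col_sum_dilation i g j : col_sum (dilation i g) j = if j == i then g else 1%N.
Proof.
rewrite /col_sum !mxE.
by case: (letterP j) => ->; case: (letterP i) => -> /=; rewrite ?addn0.
Qed.

Lemma dilation_col_sum_gt0 i g j : 0 < g -> 0 < col_sum (dilation i g) j.
Proof. by rewrite col_sum_dilation; case: (j == i). Qed.

Lemma dilation_not_letter_to_letter i g : 1 < g -> ~ letter_to_letter (dilation i g).
Proof. by move=> g_gt1 /(_ i); rewrite col_sum_dilation eqxx => g1; rewrite g1 in g_gt1. Qed.

Definition row_divn (i : letter) (g : nat) (P : 'M[nat]_2) : 'M[nat]_2 :=
  \matrix_(k, j) (if k == i then P k j %/ g else P k j).

Definition col_divn (j : letter) (g : nat) (P : 'M[nat]_2) : 'M[nat]_2 :=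
  \matrix_(k, l) (if l == j then P k l %/ g else P k l).

Lemma dilation_row_divn i g (P : 'M[nat]_2) :
  (forall j, g %| P i j) -> (dilation i g *m row_divn i g P)%R = P.
Proof.
move=> dvd; apply/matrixP => k j; rewrite mul_diag_mx !mxE natrME.
by case: eqP => [-> | _]; [rewrite mulnC divnK | rewrite mul1n].
Qed.

Lemma col_divn_dilation j g (P : 'M[nat]_2) :
  (forall k, g %| P k j) -> (col_divn j g P *m dilation j g)%R = P.
Proof.
move=> dvd; apply/matrixP => k l; rewrite mul_mx_diag !mxE natrME.
by case: eqP => [-> | _]; [rewrite divnK | rewrite muln1].
Qed.

Lemma divn_eq0_dvdn g m : 0 < g -> g %| m -> (m %/ g == 0) = (m == 0).
Proof. by move=> g_gt0 /divnK {2}<-; rewrite muln_eq0 (gtn_eqF g_gt0) orbF. Qed.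

Lemma not_excl_irreducible_of_dilation (P Q : 'M[nat]_2) i g :
  no_zero_row_col P -> has_dominant_line P -> 1 < g ->
  (forall k j, (Q k j == 0) = (P k j == 0)) ->
  (dilation i g *m Q)%R = P \/ (Q *m dilation i g)%R = P ->
  ~ excl_irreducible P.
Proof.
move=> P0 domP g_gt1 zeroQ factP.
have [_ Pcols] := no_zero_row_col_sums P0.
have Qpos j : 0 < col_sum Q j.
  by move: (Pcols j); rewrite /col_sum !lt0n !addn_eq0 !zeroQ.
have Q_not_ll : ~ letter_to_letter Q.
  move=> Qll; apply: (not_dominant_of_zero_in_cols P0 _ domP) => j.
  by rewrite -!zeroQ; move: (Qll j); rewrite /col_sum; lia.
have Dpos j : 0 < col_sum (dilation i g) j by apply: dilation_col_sum_gt0; lia.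
have D_not_ll : ~ letter_to_letter (dilation i g) by apply: dilation_not_letter_to_letter.
by case: factP => factP; apply: (not_excl_irreducible_of_factorization P0 factP).
Qed.

Lemma not_excl_irreducible_of_row_gcd (P : 'M[nat]_2) i :
  no_zero_row_col P -> has_dominant_line P -> gcdn (P i la) (P i lb) != 1 ->
  ~ excl_irreducible P.
Proof.
move=> P0 domP; set g := gcdn _ _ => g_neq1.
have [rows _] := no_zero_row_col_sums P0.
have g_gt1 : 1 < g.
  by have := rows i; rewrite /g; have := gcdn_gt0 (P i la) (P i lb); lia.
have g_dvd j : g %| P i j by case: (letterP j) => ->; [apply: dvdn_gcdl | apply: dvdn_gcdr].
apply: (not_excl_irreducible_of_dilation (Q := row_divn i g P) P0 domP g_gt1).
  move=> k j; rewrite mxE; case: (k =P i) => [-> | _] //.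
  by rewrite divn_eq0_dvdn // ltnW.
by left; apply: dilation_row_divn.
Qed.

Lemma not_excl_irreducible_of_col_gcd (P : 'M[nat]_2) j :
  no_zero_row_col P -> has_dominant_line P -> gcdn (P la j) (P lb j) != 1 ->
  ~ excl_irreducible P.
Proof.
move=> P0 domP; set g := gcdn _ _ => g_neq1.
have [_ cols] := no_zero_row_col_sums P0.
have g_gt1 : 1 < g.
  by have := cols j; rewrite /g /col_sum; have := gcdn_gt0 (P la j) (P lb j); lia.
have g_dvd k : g %| P k j by case: (letterP k) => ->; [apply: dvdn_gcdl | apply: dvdn_gcdr].
apply: (not_excl_irreducible_of_dilation (Q := col_divn j g P) P0 domP g_gt1).
  move=> k l; rewrite mxE; case: (l =P j) => [-> | _] //.
  by rewrite divn_eq0_dvdn // ltnW.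
by right; apply: col_divn_dilation.
Qed.

Theorem proposition24 (P : 'M[nat]_2) :
  no_zero_row_col P ->
  (let alpha := P la la in let beta := P la lb in
   let gamma := P lb la in let delta := P lb lb in
   [\/ gcdn alpha beta != 1%N, gcdn alpha gamma != 1%N,
       gcdn delta beta != 1%N | gcdn delta gamma != 1%N]) ->
  ((exists i i' : 'I_2, i != i' /\ row_dominates P i i') \/
   (exists j j' : 'I_2, j != j' /\ col_dominates P j j')) ->
  ~ excl_irreducible P.
Proof.
move=> P0 gcd_neq1 domP; case: gcd_neq1 => /=.
- exact: not_excl_irreducible_of_row_gcd.
- exact: not_excl_irreducible_of_col_gcd.
- by rewrite gcdnC; apply: not_excl_irreducible_of_col_gcd.
- by rewrite gcdnC; apply: not_excl_irreducible_of_row_gcd.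
Qed.
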